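(* Let $G$ be a graph and let $X\subseteq V(G)$. Then $\mathrm{cmp}(G)\le \mathrm{cmp}(G-X)+|X|$.
   Context: All graphs are finite and simple. A forest decomposition of a graph $G$ is a pair $(F,(W_x)_{x\in V(F)})$ where $F$ is a forest and $W_x\subseteq V(G)$, such that (1) for every vertex $u$ of $G$, $\{x\in V(F)\mid u\in W_x\}$ induces a nonempty connected subgraph of $F$, and (2) every edge $uv$ of $G$ has both ends in some bag $W_x$. Its width is the maximum size of a bag minus one. It is suitable if additionally (3) $F$ is a subgraph of $G$ with $V(F)=V(G)$, and (4) $u\in W_u$ for every $u\in V(G)$. The complexity $\mathrm{cmp}(G)$ is the minimum width of a suitable forest decomposition of $G$, with the convention $\mathrm{cmp}(G)=0$ if $G$ has no vertices. *)

(* A finite simple graph is a finType T of vertices with a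
   symmetric irreflexive edge relation e.  Induced subgraphs G[V] are handled
   by carrying the vertex set V : {set T} explicitly; G itself is V = [set: T]
   and G - X is V = ~: X. *)
From Stdlib Require Import ClassicalEpsilon.
From mathcomp Require Import all_boot.
Set Implicit Arguments. Unset Strict Implicit. Unset Printing Implicit Defensive.

Section Defs.
Variable T : finType.

Definition forest (f : rel T) : Prop :=
  forall (x : T) (p : seq T), uniq (x :: p) -> 2 <= size p ->
    path f x p -> ~~ f (last x p) x.

(* (F, (W_x)_{x in V}) is a suitable forest decomposition of G[V], where
   G = (T, e) and F = (V, f). *)
Definition suitable_fd (e : rel T) (V : {set T}) (f : rel T) (W : T -> {set T}) : Prop :=
      (forall a b, f a b -> [/\ a \in V, b \in V & e a b]) /\
      symmetric f /\
      forest f /\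
      (forall x, x \in V -> W x \subset V) /\
      (forall u, u \in V -> (exists2 x, x \in V & u \in W x) /\
         forall x y, x \in V -> y \in V -> u \in W x -> u \in W y ->
           connect [rel a b | [&& f a b, u \in W a & u \in W b]] x y) /\
      (forall u v, u \in V -> v \in V -> e u v ->
         exists2 x, x \in V & (u \in W x) && (v \in W x)) /\
      (forall u, u \in V -> u \in W u).

Definition has_sfd (e : rel T) (V : {set T}) (k : nat) : Prop :=
  exists f W, suitable_fd e V f W /\ forall x, x \in V -> #|W x| <= k.+1.

Definition pbool (P : Prop) : bool :=
  if excluded_middle_informative P then true else false.

(* Widths are always <= |V|-1 (bags are subsets of V), so searching
   0..|V|-1 suffices; for V empty the least such k is 0 (convention). *)
Definition cmp (e : rel T) (V : {set T}) : nat :=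
  find (fun k => pbool (has_sfd e V k)) (iota 0 #|V|).

End Defs.

(* By induction on |X| it suffices to add one vertex v to a suitable forest
   decomposition (F, W) of G[V] while increasing the width by at most one.
   In every component of F containing a neighbour of v, pick one such
   neighbour as the anchor of that component.  Join v to all anchors, give v
   the bag {v}, and add v to every bag of an anchored component.  The new
   graph is still a forest because distinct anchors lie in distinct
   components; the nodes whose bag contains v form v together with the
   anchored components, which v connects; an edge vw is covered by the bag
   of w; and every bag grows by at most the vertex v. *)

From Stdlib Require Import ClassicalEpsilon.
From mathcomp Require Import all_boot.

Set Implicit Arguments. Unset Strict Implicit. Unset Printing Implicit Defensive.

Lemma connect_sub_inv (T : finType) (e e' : rel T) (P : pred T) x y :
  P x -> (forall a b, P a -> e a b -> P b && e' a b) ->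
  connect e x y -> connect e' x y.
Proof.
move=> Px sub_e /connectP[p e_p ->].
elim: p x Px e_p => [|z p IHp] x Px //= /andP[exz e_p].
have /andP[Pz e'xz] := sub_e _ _ Px exz.
exact: connect_trans (connect1 e'xz) (IHp _ Pz e_p).
Qed.

Lemma forestP (T : finType) (f : rel T) :
  forest f <-> forall c, uniq c -> 2 < size c -> ~~ cycle f c.
Proof.
split=> [f_forest [|x p] //= c_uniq c_size | f_acyclic x p c_uniq p_size f_p].
  rewrite rcons_path; apply/negP => /andP[f_p f_last].
  exact: negP (f_forest x p c_uniq c_size f_p) f_last.
by apply/negP=> f_last; move/negP: (f_acyclic _ c_uniq p_size); rewrite /= rcons_path f_p.
Qed.

Definition bag_edge (T : finType) (f : rel T) (W : T -> {set T}) (u : T) : rel T :=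
  [rel a b | [&& f a b, u \in W a & u \in W b]].

Lemma bag_edge_sym (T : finType) (f : rel T) W u :
  symmetric f -> symmetric (bag_edge f W u).
Proof. by move=> f_sym a b; rewrite /bag_edge /= f_sym; congr (_ && _); exact: andbC. Qed.

Section AddVertex.

Variables (T : finType) (e : rel T) (V : {set T}) (v : T).
Variables (f : rel T) (W : T -> {set T}).
Hypothesis e_sym : symmetric e.
Hypothesis vV : v \notin V.
Hypothesis fV : forall a b, f a b -> [/\ a \in V, b \in V & e a b].
Hypothesis f_sym : symmetric f.

Definition anchor z := [pick w | [&& w \in V, e v w & connect f z w]].
Definition anchored z := anchor z != None.

Definition ext_forest a b :=
  [|| f a b, (a == v) && (anchor b == Some b) | (b == v) && (anchor a == Some a)].

Definition ext_bag x :=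
  if x == v then [set v] else if anchored x then v |: W x else W x.

Lemma memV_neq a : a \in V -> a != v.
Proof. by apply: contraTneq => ->. Qed.

Lemma anchor_connect a b : connect f a b -> anchor a = anchor b.
Proof.
by move=> ab; apply: eq_pick => w /=; rewrite (same_connect (sym_connect_sym f_sym) ab).
Qed.

Lemma anchorP a r : anchor a = Some r -> [/\ r \in V, e v r & connect f a r].
Proof. by rewrite /anchor; case: pickP => [r' /and3P[? ? ?] [<-] | //]. Qed.

Lemma anchor_id a r : anchor a = Some r -> anchor r = Some r.
Proof. by move=> ar; have [_ _ /anchor_connect <-] := anchorP ar. Qed.

Lemma anchored_nbr z : z \in V -> e v z -> anchored z.
Proof.
by move=> zV vz; rewrite /anchored /anchor; case: pickP => // /(_ z); rewrite zV vz connect0.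
Qed.

Lemma anchor_inj a b :
  anchor a = Some a -> anchor b = Some b -> connect f a b -> a = b.
Proof. by move=> aa bb /anchor_connect; rewrite aa bb => -[]. Qed.

Lemma ext_forest_vl b : ext_forest v b = (anchor b == Some b).
Proof.
rewrite /ext_forest eqxx /=.
have -> : f v b = false by apply/negP => /fV[]; rewrite (negbTE vV).
by case: (eqVneq b v) => [->|_]; rewrite ?orbb ?andbF ?orbF.
Qed.

Lemma ext_forestE a b : a != v -> b != v -> ext_forest a b = f a b.
Proof. by move=> /negbTE av /negbTE bv; rewrite /ext_forest av bv !orbF. Qed.

Lemma ext_forest_sym : symmetric ext_forest.
Proof. by move=> a b; rewrite /ext_forest f_sym; congr (_ || _); exact: orbC. Qed.

Lemma ext_forest_sub a b :
  ext_forest a b -> [/\ a \in v |: V, b \in v |: V & e a b].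
Proof.
have sub_e x : anchor x == Some x -> (x \in v |: V) && e v x.
  by move=> /eqP/anchorP[xV vx _]; rewrite in_setU1 xV orbT.
case/or3P=> [/fV[aV bV ab] | /andP[/eqP-> /sub_e/andP[]] | /andP[/eqP-> /sub_e/andP[]]].
- by rewrite !in_setU1 aV bV !orbT.
- by rewrite setU11.
- by rewrite setU11 e_sym.
Qed.

Lemma ext_forest_forest : forest f -> forest ext_forest.
Proof.
move=> /forestP f_acyclic; apply/forestP => c c_uniq c_size.
have ext_f : {in predC1 v &, ext_forest =2 f} by move=> a b /[!inE]; exact: ext_forestE.
have [vc | vNc] := boolP (v \in c); last first.
  rewrite (eq_in_cycle ext_f) ?f_acyclic //.
  by apply/allP => a a_in; rewrite inE; apply: contraNneq vNc => <-.
case/rot_to: vc => i q rot_c.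
rewrite -(rot_cycle i) rot_c; rewrite -(rot_uniq i) rot_c in c_uniq.
rewrite -(size_rot i) rot_c in c_size.
case: q c_uniq c_size {rot_c} => [|x [|y p]] //= /and3P[vNxyp xNyp _] _.
apply/negP; rewrite rcons_path ext_forest_vl => /and4P[/eqP xx xy yp last_v].
have lp := mem_last y p; set l := last y p in last_v lp.
have ll : anchor l = Some l by apply/eqP; rewrite -ext_forest_vl ext_forest_sym.
suff xl : x = l by move: xNyp; rewrite xl lp.
have xyp_v : all (predC1 v) [:: x, y & p].
  by apply/allP => a a_in; rewrite inE; apply: contraNneq vNxyp => <-.
apply: anchor_inj xx ll _; apply/connectP; exists (y :: p) => //.
by rewrite -(eq_in_path ext_f xyp_v) /= xy.
Qed.

Hypothesis WV : forall x, x \in V -> W x \subset V.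

Lemma ext_bagE x : x != v -> ext_bag x = if anchored x then v |: W x else W x.
Proof. by rewrite /ext_bag => /negbTE->. Qed.

Lemma subset_ext_bag x : x != v -> W x \subset ext_bag x.
Proof. by move=> xv; rewrite ext_bagE //; case: anchored => //; exact: subsetU1. Qed.

Lemma mem_ext_bag u x : u != v -> (u \in ext_bag x) = (x != v) && (u \in W x).
Proof.
move=> /negbTE uv; rewrite /ext_bag; case: eqP => [_|_]; first by rewrite in_set1 uv.
by case: anchored; rewrite ?in_setU1 ?uv.
Qed.

Lemma v_in_ext_bag x : x \in V -> (v \in ext_bag x) = anchored x.
Proof.
move=> xV; rewrite ext_bagE ?memV_neq //; case: anchored; first exact: setU11.
by apply: contraNF vV => /(subsetP (WV xV)).
Qed.

Lemma ext_bag_sub x : x \in v |: V -> ext_bag x \subset v |: V.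
Proof.
case/setU1P=> [->|xV]; first by rewrite /ext_bag eqxx sub1set setU11.
rewrite ext_bagE ?memV_neq //; case: anchored; first exact: setUS (WV xV).
exact: subset_trans (WV xV) (subsetU1 _ _).
Qed.

Lemma ext_bag_card k : (forall x, x \in V -> #|W x| <= k.+1) ->
  forall x, x \in v |: V -> #|ext_bag x| <= k.+2.
Proof.
move=> W_card x /setU1P[->|xV]; first by rewrite /ext_bag eqxx cards1.
rewrite ext_bagE ?memV_neq //; case: anchored; last exact: leq_trans (W_card _ xV) _.
by rewrite cardsU1; exact: leq_add (leq_b1 _) (W_card _ xV).
Qed.

Hypothesis W_self : forall u, u \in V -> u \in W u.

Lemma ext_bag_self u : u \in v |: V -> u \in ext_bag u.
Proof.
case/setU1P=> [->|uV]; first by rewrite /ext_bag eqxx set11.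
exact: subsetP (subset_ext_bag (memV_neq uV)) _ (W_self uV).
Qed.

Lemma ext_bag_nbr w : w \in V -> e v w -> (v \in ext_bag w) && (w \in ext_bag w).
Proof.
move=> wV vw; rewrite v_in_ext_bag ?anchored_nbr //=.
by apply: ext_bag_self; rewrite in_setU1 wV orbT.
Qed.

Hypothesis W_edge : forall a b, a \in V -> b \in V -> e a b ->
  exists2 x, x \in V & (a \in W x) && (b \in W x).

Lemma ext_bag_edge a b : a \in v |: V -> b \in v |: V -> e a b ->
  exists2 x, x \in v |: V & (a \in ext_bag x) && (b \in ext_bag x).
Proof.
case/setU1P=> [->|aV] /setU1P[->|bV] ab.
- by exists v; rewrite ?setU11 // /ext_bag eqxx set11.
- by exists b; rewrite ?in_setU1 ?bV ?orbT // ext_bag_nbr.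
- by exists a; rewrite ?in_setU1 ?aV ?orbT // andbC ext_bag_nbr // e_sym.
- have [x xV /andP[ax bx]] := W_edge aV bV ab.
  exists x; first by rewrite in_setU1 xV orbT.
  by rewrite !(subsetP (subset_ext_bag (memV_neq xV))).
Qed.

Hypothesis W_connect : forall u, u \in V -> forall x y, x \in V -> y \in V ->
  u \in W x -> u \in W y -> connect (bag_edge f W u) x y.

Lemma ext_bag_connect_v x : x \in v |: V -> v \in ext_bag x ->
  connect (bag_edge ext_forest ext_bag v) v x.
Proof.
case/setU1P=> [-> _ | xV]; first exact: connect0.
rewrite v_in_ext_bag // /anchored; case ax: (anchor x) => [r|] // _.
have [rV vr xr] := anchorP ax; have rr := anchor_id ax.
have r_anchored : anchored r by rewrite /anchored rr.
have vr_edge : bag_edge ext_forest ext_bag v v r.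
  by rewrite /bag_edge /= ext_forest_vl rr eqxx /ext_bag eqxx set11 -/(ext_bag r) v_in_ext_bag.
apply: connect_trans (connect1 vr_edge) _.
rewrite (sym_connect_sym f_sym) in xr.
apply: (connect_sub_inv (P := fun a => (a \in V) && anchored a)) xr.
  by rewrite rV r_anchored.
move=> a b /andP[aV a_anchored] fab; have [_ bV _] := fV fab.
have b_anchored : anchored b by rewrite /anchored -(anchor_connect (connect1 fab)).
by rewrite bV b_anchored /bag_edge /= /ext_forest fab /= !v_in_ext_bag // a_anchored.
Qed.

Lemma ext_bag_connect u x y : u \in v |: V -> x \in v |: V -> y \in v |: V ->
  u \in ext_bag x -> u \in ext_bag y -> connect (bag_edge ext_forest ext_bag u) x y.
Proof.
case: (eqVneq u v) => [-> _ xV yV vx vy | uv].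
  apply: connect_trans (ext_bag_connect_v yV vy).
  by rewrite (sym_connect_sym (bag_edge_sym _ _ ext_forest_sym)) ext_bag_connect_v.
have inV z : z \in v |: V -> z != v -> z \in V by case/setU1P=> [->|]; rewrite ?eqxx.
move=> /inV-/(_ uv) uV /inV xV /inV yV; rewrite !mem_ext_bag // => /andP[xv ux] /andP[yv uy].
apply: connect_sub (W_connect uV (xV xv) (yV yv) ux uy) => a b /and3P[fab ua ub].
have [aV bV _] := fV fab; apply: connect1.
by rewrite /bag_edge /= /ext_forest fab !mem_ext_bag // ua ub !memV_neq.
Qed.

End AddVertex.

Lemma has_sfd_add_vertex (T : finType) (e : rel T) (V : {set T}) v k :
  symmetric e -> v \notin V -> has_sfd e V k -> has_sfd e (v |: V) k.+1.
Proof.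
move=> e_sym vV [f [W [[fV [f_sym [f_forest [WV [W_conn [W_edge W_self]]]]]] W_card]]].
exists (ext_forest e V v f), (ext_bag e V v f W).
split; last exact: ext_bag_card.
split; first exact: ext_forest_sub.
split; first exact: ext_forest_sym.
split; first exact: ext_forest_forest.
split; first exact: ext_bag_sub.
split; last by split; [exact: ext_bag_edge | exact: ext_bag_self].
move=> u uV; split; first by exists u => //; exact: ext_bag_self.
by move=> x y; apply: ext_bag_connect => // w /W_conn[_].
Qed.

Lemma has_sfd_setU (T : finType) (e : rel T) (X V : {set T}) k :
  symmetric e -> [disjoint X & V] -> has_sfd e V k -> has_sfd e (X :|: V) (k + #|X|).
Proof.
move=> e_sym; move Xn: #|X| => n; elim: n X Xn => [|n IHn] X Xn XV V_sfd.
  by rewrite (cards0_eq Xn) set0U addn0.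
have [x xX] : exists x, x \in X by apply/set0Pn; rewrite -card_gt0 Xn.
have X'n : #|X :\ x| = n by move: Xn; rewrite (cardsD1 x) xX => -[].
have X'V : [disjoint X :\ x & V] by apply: disjointWl XV; exact: subsetDl.
have xNX'V : x \notin X :\ x :|: V by rewrite !inE eqxx /= (disjointFr XV xX).
rewrite addnS -{1}(setD1K xX) -setUA.
exact: has_sfd_add_vertex xNX'V (IHn _ X'n X'V V_sfd).
Qed.

Lemma pboolP (P : Prop) : reflect P (pbool P).
Proof. by rewrite /pbool; case: excluded_middle_informative => HP; constructor. Qed.

Lemma cmp_le_card (T : finType) (e : rel T) (V : {set T}) : cmp e V <= #|V|.
Proof. by rewrite /cmp -[leqRHS](size_iota 0); exact: find_size. Qed.

Lemma cmp_min (T : finType) (e : rel T) (V : {set T}) k :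
  has_sfd e V k -> cmp e V <= k.
Proof.
move=> V_sfd; have [lt_k | ge_k] := ltnP k #|V|; last exact: leq_trans (cmp_le_card e V) ge_k.
rewrite leqNgt; apply/negP => /(before_find 0).
by rewrite nth_iota // add0n; case: pboolP.
Qed.

Lemma has_sfd_cmp (T : finType) (e : rel T) (V : {set T}) :
  cmp e V < #|V| -> has_sfd e V (cmp e V).
Proof.
move=> lt_cmp; have found : has (fun k => pbool (has_sfd e V k)) (iota 0 #|V|).
  by rewrite has_find size_iota.
by have := nth_find 0 found; rewrite -/(cmp e V) nth_iota // add0n => /pboolP.
Qed.

Unset Implicit Arguments.

Theorem lemma3p3 (T : finType) (e : rel T) (e_sym : symmetric e)
    (e_irr : irreflexive e) (X : {set T}) :
  cmp e [set: T] <= cmp e (~: X) + #|X|.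
Proof.
have [lt_cmp | ge_cmp] := ltnP (cmp e (~: X)) #|~: X|.
  apply: cmp_min; rewrite -(setUCr X).
  apply: has_sfd_setU => //; last exact: has_sfd_cmp.
  by rewrite disjoints_subset setCK.
apply: leq_trans (cmp_le_card e _) _.
by rewrite cardsT -(cardsC X) addnC leq_add2r.
Qed.
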